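(* Let $F$ be a continuous, order-preserving, and additively homogeneous self-map of $\mathbb{T}^n$. Then \[ \operatorname{cond}_{\mathbb{R}}(F) = |\underline{\mathrm{cw}}(F)|^{-1} \quad\text{and}\quad \operatorname{cond}(F) = |\overline{\mathrm{cw}}(F)|^{-1}, \] with the conventions $0^{-1}=+\infty$ and $(+\infty)^{-1}=0$.
   Context: $\mathbb{T} = \mathbb{R}\cup\{-\infty\}$ is the tropical (max-plus) semifield. $\mathbb{T}$ carries the topology of the metric $(a,b)\mapsto|e^a-e^b|$, and $\mathbb{T}^n$ carries the product topology. $\mathbb{T}^n$ is ordered entrywise, and $\mathbb{0}\in\mathbb{T}^n$ denotes the vector with all entries $-\infty$. For $\lambda\in\mathbb{T}$ and $x\in\mathbb{T}^n$, $\lambda+x$ is the vector with entries $\lambda+x_i$; for $u\in\mathbb{R}^n$, $u+F$ denotes the map $x\mapsto u+F(x)$ (entrywise addition). A self-map $F$ of $\mathbb{T}^n$ is order-preserving if $x\le y$ implies $F(x)\le F(y)$, and additively homogeneous if $F(\lambda+x)=\lambda+F(x)$ for all $\lambda\in\mathbb{T}$ and $x\in\mathbb{T}^n$. Notation: $y\ll z$ means $y_i<z_i$ for all $i$; $\|u\|_\infty=\max_i|u_i|$. Upper and lower Collatz–Wielandt numbers: $\overline{\mathrm{cw}}(F)=\inf\{\mu\in\mathbb{R}: \exists z\in\mathbb{R}^n,\ F(z)\le \mu+z\}$ and $\underline{\mathrm{cw}}(F)=\sup\{\mu\in\mathbb{R}: \exists z\in\mathbb{R}^n,\ F(z)\ge\mu+z\}$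 (with $\inf\emptyset=+\infty$, $\sup\emptyset=-\infty$). Feasibility problems: $\mathscr{P}(F)$ is the problem ''does there exist $x\in\mathbb{T}^n$ with $x\ne\mathbb{0}$ and $x\le F(x)$?''; $\mathscr{P}_{\mathbb{R}}(F)$ is the problem ''does there exist $x\in\mathbb{R}^n$ with $x\ll F(x)$?''. A problem is feasible if such an $x$ exists, infeasible otherwise. Condition numbers: if $\mathscr{P}(F)$ is feasible, $\operatorname{cond}(F)=(\inf\{\|u\|_\infty: u\in\mathbb{R}^n,\ \mathscr{P}(u+F)\text{ infeasible}\})^{-1}$; if $\mathscr{P}(F)$ is infeasible, $\operatorname{cond}(F)=(\inf\{\|u\|_\infty: u\in\mathbb{R}^n,\ \mathscr{P}(u+F)\text{ feasible}\})^{-1}$, with $0^{-1}=+\infty$ and $(+\infty)^{-1}=0$ (infimum of the empty set is $+\infty$). $\operatorname{cond}_{\mathbb{R}}(F)$ is defined identically with $\mathscr{P}$ replaced by $\mathscr{P}_{\mathbb{R}}$. *)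

From Stdlib Require Import Reals Lra ClassicalEpsilon.
From Stdlib Require Fin.
Open Scope R_scope.
Set Implicit Arguments.

(** Tropical (max-plus) semifield T = R ∪ {-oo}: [None] is -oo. *)
Definition Trop := option R.
Definition Tvec (n : nat) := Fin.t n -> Trop.
Definition Rvec (n : nat) := Fin.t n -> R.

Definition tle (a b : Trop) : Prop :=
  match a, b with
  | None, _ => True
  | Some _, None => False
  | Some x, Some y => x <= y
  end.

Definition tlt (a b : Trop) : Prop :=
  match a, b with
  | None, None => False
  | None, Some _ => True
  | Some _, None => False
  | Some x, Some y => x < y
  end.

Definition tadd (l a : Trop) : Trop :=
  match l, a with
  | Some x, Some y => Some (x + y)
  | _, _ => None
  end.

Definition texp (a : Trop) : R := match a with None => 0 | Some x => exp x end.
Definition tdist (a b : Trop) : R := Rabs (texp a - texp b).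

Definition vle n (x y : Tvec n) : Prop := forall i, tle (x i) (y i).
Definition vshift n (l : Trop) (x : Tvec n) : Tvec n := fun i => tadd l (x i).
Definition vzero n : Tvec n := fun _ => None.
Definition of_real n (z : Rvec n) : Tvec n := fun i => Some (z i).

Definition continuous_T n (F : Tvec n -> Tvec n) : Prop :=
  forall (x : Tvec n) (eps : R), 0 < eps ->
    exists delta, 0 < delta /\
      forall y : Tvec n, (forall i, tdist (x i) (y i) < delta) ->
        forall i, tdist (F x i) (F y i) < eps.

Definition order_preserving n (F : Tvec n -> Tvec n) : Prop :=
  forall x y : Tvec n, vle x y -> vle (F x) (F y).

Definition additively_homogeneous n (F : Tvec n -> Tvec n) : Prop :=
  forall (l : Trop) (x : Tvec n), F (vshift l x) = vshift l (F x).

Definition translate n (u : Rvec n) (F : Tvec n -> Tvec n) : Tvec n -> Tvec n :=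
  fun x i => tadd (Some (u i)) (F x i).

Fixpoint vnorm (n : nat) : Rvec n -> R :=
  match n return Rvec n -> R with
  | O => fun _ => 0
  | S m => fun u => Rmax (Rabs (u Fin.F1)) (@vnorm m (fun i => u (Fin.FS i)))
  end.

Definition feasible n (F : Tvec n -> Tvec n) : Prop :=
  exists x : Tvec n, x <> @vzero n /\ vle x (F x).

Definition feasible_R n (F : Tvec n -> Tvec n) : Prop :=
  exists x : Rvec n, forall i, tlt (of_real x i) (F (of_real x) i).

Inductive ER := ERfin (r : R) | ERpinf | ERminf.

Definition ER_le (a b : ER) : Prop :=
  match a, b with
  | ERminf, _ => True
  | _, ERpinf => True
  | ERfin x, ERfin y => x <= y
  | _, _ => False
  end.

Definition is_ER_inf (S : R -> Prop) (v : ER) : Prop :=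
  (forall r, S r -> ER_le v (ERfin r)) /\
  (forall w, (forall r, S r -> ER_le w (ERfin r)) -> ER_le w v).

Definition is_ER_sup (S : R -> Prop) (v : ER) : Prop :=
  (forall r, S r -> ER_le (ERfin r) v) /\
  (forall w, (forall r, S r -> ER_le (ERfin r) w) -> ER_le v w).

(** infimum / supremum in [-oo,+oo]; inf of empty set is +oo, sup is -oo *)
Definition ER_inf (S : R -> Prop) : ER := epsilon (inhabits ERpinf) (is_ER_inf S).
Definition ER_sup (S : R -> Prop) : ER := epsilon (inhabits ERminf) (is_ER_sup S).

Definition ER_abs (a : ER) : ER :=
  match a with ERfin r => ERfin (Rabs r) | _ => ERpinf end.

(** inverse with 0^{-1} = +oo, (+oo)^{-1} = 0 (and (-oo)^{-1} = 0, unused) *)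
Definition ER_inv (a : ER) : ER :=
  match a with
  | ERfin r => if Req_dec_T r 0 then ERpinf else ERfin (/ r)
  | _ => ERfin 0
  end.

Definition cw_upper n (F : Tvec n -> Tvec n) : ER :=
  ER_inf (fun mu => exists z : Rvec n,
            vle (F (of_real z)) (vshift (Some mu) (of_real z))).

Definition cw_lower n (F : Tvec n -> Tvec n) : ER :=
  ER_sup (fun mu => exists z : Rvec n,
            vle (vshift (Some mu) (of_real z)) (F (of_real z))).

Definition cond_gen n (P : (Tvec n -> Tvec n) -> Prop) (F : Tvec n -> Tvec n) : ER :=
  if excluded_middle_informative (P F)
  then ER_inv (ER_inf (fun r => exists u : Rvec n, r = vnorm u /\ ~ P (translate u F)))
  else ER_inv (ER_inf (fun r => exists u : Rvec n, r = vnorm u /\ P (translate u F))).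

Definition cond n (F : Tvec n -> Tvec n) : ER := cond_gen (@feasible n) F.
Definition cond_R n (F : Tvec n -> Tvec n) : ER := cond_gen (@feasible_R n) F.

From Stdlib Require Import Reals Lra Lia ClassicalEpsilon Classical FunctionalExtensionality.
From Stdlib Require Fin.
Open Scope R_scope.
Set Implicit Arguments.

(* Both feasibility problems are governed by the Collatz-Wielandt sets.  P_R(G) is feasible
   iff some mu > 0 admits a real z with mu + z <= G z; for continuous, order-preserving,
   homogeneous G, P(G) is infeasible iff some mu < 0 admits a real z with G z <= mu + z.
   Translating G by u moves every such mu by at most ||u||, and by exactly c when u is the
   constant vector c, so the distance to the ill-posed translates is |cw|.
   The hard step is the second characterisation: if P(G) is infeasible, the decreasing iterates
   y_{k+1} = min(y_k, G y_k) of 0 converge, by continuity, to some y <= G y, which must be the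
   vector -oo; a real approximation h of x |-> min(x, G x) then satisfies h^K(0) << 0, and
   z = min_j (h^j(0) + j d) gives G z <= z - d. *)

Lemma exp_le_mono x y : x <= y -> exp x <= exp y.
Proof. intros [H | ->]; [left; apply exp_increasing; exact H | lra]. Qed.

Lemma exp_le_inv x y : exp x <= exp y -> x <= y.
Proof. intros H; apply Rnot_lt_le; intro Hlt; apply exp_increasing in Hlt; lra. Qed.

Lemma texp_ge0 a : 0 <= texp a.
Proof. destruct a; simpl; [left; apply exp_pos | lra]. Qed.

Lemma tle_texp a b : tle a b <-> texp a <= texp b.
Proof.
  destruct a as [x|], b as [y|]; simpl; split; intro H; try tauto; try lra;
  try (apply exp_le_mono; auto; fail); try (apply exp_le_inv; auto; fail);
  first [pose proof (exp_pos x); lra | pose proof (exp_pos y); lra].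
Qed.

Lemma tle_trans a b c : tle a b -> tle b c -> tle a c.
Proof. rewrite !tle_texp; lra. Qed.

Lemma tle_Some_tadd a c b : tle (Some a) (tadd (Some c) b) <-> tle (Some (a - c)) b.
Proof. destruct b; simpl; [lra | tauto]. Qed.

Lemma tle_tadd_Some a c b : tle (tadd (Some c) b) (Some a) <-> tle b (Some (a - c)).
Proof. destruct b; simpl; [lra | tauto]. Qed.

Lemma tle_Some_l a a' b : tle (Some a) b -> a' <= a -> tle (Some a') b.
Proof. destruct b; simpl; [lra | tauto]. Qed.

Lemma tle_Some_r a a' b : tle b (Some a) -> a <= a' -> tle b (Some a').
Proof. destruct b; simpl; [lra | tauto]. Qed.

Definition tlog (r : R) : Trop := if Rlt_dec 0 r then Some (ln r) else None.

Lemma texp_tlog r : 0 <= r -> texp (tlog r) = r.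
Proof. intro Hr; unfold tlog; destruct Rlt_dec as [Hpos|]; simpl; [exact (exp_ln r Hpos) | lra]. Qed.

Lemma Fin_ex_nat_uniform n (P : Fin.t n -> nat -> Prop) :
  (forall i k k', P i k -> (k <= k')%nat -> P i k') ->
  (forall i, exists k, P i k) -> exists k, forall i, P i k.
Proof.
  revert P; induction n as [|n IH]; intros P Hmon Hex.
  - exists 0%nat; intro i; inversion i.
  - destruct (IH (fun i => P (Fin.FS i))) as [k1 Hk1]; [intros; eapply Hmon; eauto | auto |].
    destruct (Hex Fin.F1) as [k0 Hk0].
    exists (Nat.max k0 k1); intro i; apply (Fin.caseS' i).
    + eapply Hmon; [exact Hk0 | lia].
    + intro j; eapply Hmon; [apply Hk1 | lia].
Qed.

Lemma Fin_ex_pos_uniform n (P : Fin.t n -> R -> Prop) :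
  (forall i r r', P i r -> 0 < r' <= r -> P i r') ->
  (forall i, exists r, 0 < r /\ P i r) -> exists r, 0 < r /\ forall i, P i r.
Proof.
  revert P; induction n as [|n IH]; intros P Hmon Hex.
  - exists 1; split; [lra | intro i; inversion i].
  - destruct (IH (fun i => P (Fin.FS i))) as [r1 [Hr1 Hk1]];
      [intros; eapply Hmon; eauto | auto |].
    destruct (Hex Fin.F1) as [r0 [Hr0 Hk0]].
    assert (Hmin : 0 < Rmin r0 r1) by (apply Rmin_glb_lt; auto).
    exists (Rmin r0 r1); split; [exact Hmin|]; intro i; apply (Fin.caseS' i).
    + eapply Hmon; [exact Hk0 | split; [exact Hmin | apply Rmin_l]].
    + intro j; eapply Hmon; [apply Hk1 | split; [exact Hmin | apply Rmin_r]].
Qed.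

Lemma Fin_argmax m (g : Fin.t (S m) -> R) : exists i0, forall i, g i <= g i0.
Proof.
  induction m as [|m IH].
  - exists Fin.F1; intro i; apply (Fin.caseS' i); [lra | intro j; inversion j].
  - destruct (IH (fun i => g (Fin.FS i))) as [j Hj].
    destruct (Rle_or_lt (g Fin.F1) (g (Fin.FS j))) as [h|h].
    + exists (Fin.FS j); intro i; apply (Fin.caseS' i); [exact h | intro k; apply Hj].
    + exists Fin.F1; intro i; apply (Fin.caseS' i); [lra | intro k; specialize (Hj k); simpl in Hj; lra].
Qed.

Lemma vnorm_ge_abs n (u : Rvec n) i : Rabs (u i) <= vnorm u.
Proof.
  induction n as [|n IH]; [inversion i|].
  simpl; apply (Fin.caseS' i); [apply Rmax_l|].
  intro j; eapply Rle_trans; [apply (IH (fun k => u (Fin.FS k))) | apply Rmax_r].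
Qed.

Lemma vnorm_bounds n (u : Rvec n) i : - vnorm u <= u i <= vnorm u.
Proof. generalize (vnorm_ge_abs u i); unfold Rabs; destruct Rcase_abs; lra. Qed.

Lemma vnorm_const m c : vnorm (n := S m) (fun _ => c) = Rabs c.
Proof.
  induction m as [|m IH]; [apply Rmax_left, Rabs_pos|].
  change (Rmax (Rabs c) (vnorm (n := S m) (fun _ => c)) = Rabs c).
  rewrite IH; apply Rmax_left; lra.
Qed.

Lemma ER_le_antisym a b : ER_le a b -> ER_le b a -> a = b.
Proof. destruct a, b; simpl; try tauto; intros; f_equal; lra. Qed.

Lemma ER_sup_eq S v : is_ER_sup S v -> ER_sup S = v.
Proof.
  intro Hv; unfold ER_sup.
  destruct (epsilon_spec (inhabits ERminf) (is_ER_sup S) (ex_intro _ v Hv)) as [H1 H2].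
  apply ER_le_antisym; [apply H2, (proj1 Hv) | apply (proj2 Hv), H1].
Qed.

Lemma ER_inf_eq S v : is_ER_inf S v -> ER_inf S = v.
Proof.
  intro Hv; unfold ER_inf.
  destruct (epsilon_spec (inhabits ERpinf) (is_ER_inf S) (ex_intro _ v Hv)) as [H1 H2].
  apply ER_le_antisym; [apply (proj2 Hv), H1 | apply H2, (proj1 Hv)].
Qed.

Lemma ER_sup_exists S : exists v, is_ER_sup S v.
Proof.
  destruct (classic (exists x, S x)) as [[x0 Hx0]|Hemp].
  - destruct (classic (exists m, forall x, S x -> x <= m)) as [Hb|Hnb].
    + destruct (completeness S Hb (ex_intro _ x0 Hx0)) as [m [Hm1 Hm2]].
      exists (ERfin m); split; [intros r Hr; apply Hm1, Hr|].
      intros [a| |] Hw; simpl; [| exact I | exact (Hw x0 Hx0)].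
      apply Hm2; intros x Hx; exact (Hw x Hx).
    + exists ERpinf; split; [intros; exact I|].
      intros [a| |] Hw; simpl; [| exact I | exact (Hw x0 Hx0)].
      apply Hnb; exists a; intros x Hx; exact (Hw x Hx).
  - exists ERminf; split; [intros r Hr; apply Hemp; eauto | intros [] _; exact I].
Qed.

Definition ER_opp (a : ER) : ER :=
  match a with ERfin r => ERfin (- r) | ERpinf => ERminf | ERminf => ERpinf end.

Lemma ER_abs_opp a : ER_abs (ER_opp a) = ER_abs a.
Proof. destruct a; simpl; auto; rewrite Rabs_Ropp; reflexivity. Qed.

Lemma is_ER_inf_opp S v : is_ER_sup (fun x => S (- x)) v -> is_ER_inf S (ER_opp v).
Proof.
  intros [H1 H2]; split.
  - intros r Hr; specialize (H1 (- r)); rewrite Ropp_involutive in H1.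
    specialize (H1 Hr); destruct v; simpl in *; auto; lra.
  - intros w Hw; specialize (H2 (ER_opp w)).
    assert (H3 : forall r, S (- r) -> ER_le (ERfin r) (ER_opp w))
      by (intros r Hr; specialize (Hw _ Hr); destruct w; simpl in *; auto; lra).
    specialize (H2 H3); destruct v, w; simpl in *; auto; lra.
Qed.

Lemma ER_inf_exists S : exists v, is_ER_inf S v.
Proof.
  destruct (ER_sup_exists (fun x => S (- x))) as [v Hv].
  exists (ER_opp v); exact (is_ER_inf_opp S Hv).
Qed.

Lemma ER_inf_ext (A B : R -> Prop) : (forall r, A r <-> B r) -> ER_inf A = ER_inf B.
Proof.
  intro HAB; destruct (ER_inf_exists A) as [v [H1 H2]].
  rewrite (ER_inf_eq (conj H1 H2)); symmetry; apply ER_inf_eq; split.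
  - intros r Hr; apply H1, HAB, Hr.
  - intros w Hw; apply H2; intros r Hr; apply Hw, HAB, Hr.
Qed.

Lemma ER_sup_approx S s a : is_ER_sup S s -> ~ ER_le s (ERfin a) -> exists mu, S mu /\ a < mu.
Proof.
  intros [_ Hlub] Ha; apply NNPP; intro Hn; apply Ha, Hlub.
  intros r Hr; simpl; apply Rnot_lt_le; intro; apply Hn; eauto.
Qed.

Lemma is_ER_inf_intro (A : R -> Prop) v :
  (forall r, A r -> ER_le v (ERfin r)) ->
  (forall a, ~ ER_le (ERfin a) v -> exists r, A r /\ r < a) -> is_ER_inf A v.
Proof.
  intros Hlb Happrox; split; [exact Hlb|].
  intros [b| |] Hw; destruct v as [c| |]; simpl; try exact I.
  - apply Rnot_lt_le; intro Hcb; destruct (Happrox b) as [r [Hr Hrb]]; [simpl; lra|].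
    specialize (Hw r Hr); simpl in Hw; lra.
  - destruct (Happrox b) as [r [Hr Hrb]]; [simpl; tauto|].
    specialize (Hw r Hr); simpl in Hw; lra.
  - destruct (Happrox (c + 1)) as [r [Hr _]]; [simpl; lra | exact (Hw r Hr)].
  - destruct (Happrox 0) as [r [Hr _]]; [simpl; tauto | exact (Hw r Hr)].
Qed.

Section ConditionNumberFromMargins.

Variables (n : nat) (Q : (Tvec n -> Tvec n) -> Prop) (F : Tvec n -> Tvec n).
Variables (S : R -> Prop) (s : ER).
Hypothesis Hs : is_ER_sup S s.
Hypothesis Q_iff_margin : Q F <-> exists mu, S mu /\ 0 < mu.
Hypothesis margin_of_Q_translate :
  forall u, Q (translate u F) -> exists mu, S mu /\ - vnorm u < mu.
Hypothesis Q_translate_of_margin :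
  forall u, (exists mu, S mu /\ vnorm u < mu) -> Q (translate u F).
(* The guard matters in dimension 0, where no vector has norm [|c|] but [s] is [+oo]. *)
Hypothesis Q_translate_const_iff :
  (exists r, s = ERfin r) -> forall c, exists u,
    vnorm u = Rabs c /\ (Q (translate u F) <-> exists mu, S mu /\ - c < mu).

Lemma dist_to_not_Q : Q F ->
  is_ER_inf (fun r => exists u, r = vnorm u /\ ~ Q (translate u F)) (ER_abs s).
Proof.
  intro HQ; destruct (proj1 Q_iff_margin HQ) as [mu0 [Hmu0 Hpos]].
  pose proof (proj1 Hs mu0 Hmu0) as Hs0.
  apply is_ER_inf_intro.
  - intros r [u [-> HnQ]]; destruct s as [c| |]; simpl in *; try tauto.
    + rewrite Rabs_pos_eq by lra; apply Rnot_lt_le; intro Hlt.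
      apply HnQ, Q_translate_of_margin, (ER_sup_approx _ Hs); simpl; lra.
    + apply HnQ, Q_translate_of_margin, (ER_sup_approx _ Hs); simpl; tauto.
  - intros a Ha; destruct s as [c| |]; simpl in *; try tauto.
    destruct (Q_translate_const_iff (ex_intro _ c eq_refl) (- c)) as [u [Hu HQu]].
    exists (vnorm u); split.
    + exists u; split; [reflexivity|]; rewrite HQu, Ropp_involutive.
      intros [mu [Hmu Hlt]]; pose proof (proj1 Hs mu Hmu); simpl in *; lra.
    + rewrite Hu, Rabs_Ropp, Rabs_pos_eq in *; lra.
Qed.

Lemma dist_to_Q : ~ Q F ->
  is_ER_inf (fun r => exists u, r = vnorm u /\ Q (translate u F)) (ER_abs s).
Proof.
  intro HnQ.
  assert (Hs0 : ER_le s (ERfin 0)).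
  { apply (proj2 Hs); intros r Hr; simpl; apply Rnot_lt_le; intro; apply HnQ, Q_iff_margin; eauto. }
  apply is_ER_inf_intro.
  - intros r [u [-> HQu]]; destruct (margin_of_Q_translate HQu) as [mu [Hmu Hlt]].
    pose proof (proj1 Hs mu Hmu); destruct s as [c| |]; simpl in *; try tauto.
    rewrite Rabs_left1; lra.
  - intros a Ha; destruct s as [c| |]; simpl in *; try tauto.
    rewrite Rabs_left1 in Ha by lra.
    set (c' := (a - c) / 2).
    destruct (Q_translate_const_iff (ex_intro _ c eq_refl) c') as [u [Hu HQu]].
    exists (vnorm u); split.
    + exists u; split; [reflexivity|]; apply HQu, (ER_sup_approx _ Hs); simpl; unfold c'; lra.
    + rewrite Hu, Rabs_pos_eq; unfold c'; lra.
Qed.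

Lemma cond_gen_eq_margin : cond_gen Q F = ER_inv (ER_abs s).
Proof.
  unfold cond_gen; destruct (excluded_middle_informative (Q F)) as [HQ|HnQ]; f_equal; apply ER_inf_eq.
  - exact (dist_to_not_Q HQ).
  - exact (dist_to_Q HnQ).
Qed.

End ConditionNumberFromMargins.

Lemma cond_gen_not n (P : (Tvec n -> Tvec n) -> Prop) F :
  cond_gen (fun G => ~ P G) F = cond_gen P F.
Proof.
  unfold cond_gen.
  destruct (excluded_middle_informative (~ P F)), (excluded_middle_informative (P F)); try tauto;
    f_equal; apply ER_inf_ext; intro r; split; intros [u [-> Hu]]; exists u; split; auto.
  apply NNPP, Hu.
Qed.

Definition lower_cw_set n (G : Tvec n -> Tvec n) (mu : R) : Prop :=
  exists z : Rvec n, vle (vshift (Some mu) (of_real z)) (G (of_real z)).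

Definition upper_cw_set n (G : Tvec n -> Tvec n) (mu : R) : Prop :=
  exists z : Rvec n, vle (G (of_real z)) (vshift (Some mu) (of_real z)).

Lemma lower_cw_set_dim0 (G : Tvec 0 -> Tvec 0) mu : lower_cw_set G mu.
Proof. exists (fun _ => 0); intro i; inversion i. Qed.

Lemma upper_cw_set_dim0 (G : Tvec 0 -> Tvec 0) mu : upper_cw_set G mu.
Proof. exists (fun _ => 0); intro i; inversion i. Qed.

Section TranslateMargins.

Variables (n : nat) (u : Rvec n) (G : Tvec n -> Tvec n) (a : R).

Lemma lower_cw_set_translate mu :
  (forall i, a <= u i) -> lower_cw_set G mu -> lower_cw_set (translate u G) (mu + a).
Proof.
  intros Hu [z Hz]; exists z; intro i; apply tle_Some_tadd.
  apply tle_Some_l with (mu + z i); [apply Hz | specialize (Hu i); lra].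
Qed.

Lemma lower_cw_set_untranslate mu :
  (forall i, u i <= a) -> lower_cw_set (translate u G) mu -> lower_cw_set G (mu - a).
Proof.
  intros Hu [z Hz]; exists z; intro i; specialize (Hz i).
  apply tle_Some_tadd in Hz; apply tle_Some_l with (mu + z i - u i);
    [exact Hz | specialize (Hu i); simpl; lra].
Qed.

Lemma upper_cw_set_translate mu :
  (forall i, u i <= a) -> upper_cw_set G mu -> upper_cw_set (translate u G) (mu + a).
Proof.
  intros Hu [z Hz]; exists z; intro i; apply tle_tadd_Some.
  apply tle_Some_r with (mu + z i); [apply Hz | specialize (Hu i); simpl; lra].
Qed.

Lemma upper_cw_set_untranslate mu :
  (forall i, a <= u i) -> upper_cw_set (translate u G) mu -> upper_cw_set G (mu - a).
Proof.
  intros Hu [z Hz]; exists z; intro i; specialize (Hz i).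
  apply tle_tadd_Some in Hz; apply tle_Some_r with (mu + z i - u i);
    [exact Hz | specialize (Hu i); simpl; lra].
Qed.

End TranslateMargins.

Lemma tdist_tadd a x y : tdist (tadd (Some a) x) (tadd (Some a) y) = exp a * tdist x y.
Proof.
  unfold tdist; rewrite <- (Rabs_pos_eq (exp a)) by (left; apply exp_pos); rewrite <- Rabs_mult.
  f_equal; destruct x, y; simpl; rewrite ?exp_plus; ring.
Qed.

Lemma order_preserving_translate n (u : Rvec n) G :
  order_preserving G -> order_preserving (translate u G).
Proof.
  intros H x y Hxy i; specialize (H x y Hxy i); unfold translate.
  destruct (G x i), (G y i); simpl in *; auto; lra.
Qed.

Lemma additively_homogeneous_translate n (u : Rvec n) G :
  additively_homogeneous G -> additively_homogeneous (translate u G).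
Proof.
  intros H l x; unfold translate; rewrite H; apply functional_extensionality; intro i.
  unfold vshift; destruct l, (G x i); simpl; auto; f_equal; ring.
Qed.

Lemma continuous_T_translate n (u : Rvec n) G : continuous_T G -> continuous_T (translate u G).
Proof.
  intros H x eps Heps.
  assert (HM : 0 < exp (vnorm u)) by apply exp_pos.
  destruct (H x (eps / exp (vnorm u))) as [d [Hd Hy]]; [apply Rdiv_lt_0_compat; auto|].
  exists d; split; [exact Hd|]; intros y Hxy i; unfold translate; rewrite tdist_tadd.
  specialize (Hy y Hxy i).
  assert (HyM : exp (vnorm u) * tdist (G x i) (G y i) < eps).
  { replace eps with (exp (vnorm u) * (eps / exp (vnorm u))) by (field; lra).
    apply Rmult_lt_compat_l; assumption. }
  assert (exp (u i) <= exp (vnorm u)) by (apply exp_le_mono, vnorm_bounds).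
  pose proof (Rabs_pos (texp (G x i) - texp (G y i))); unfold tdist in *; nra.
Qed.

Lemma feasible_R_iff n (G : Tvec n -> Tvec n) :
  feasible_R G <-> exists mu, lower_cw_set G mu /\ 0 < mu.
Proof.
  split.
  - intros [x Hx].
    destruct (Fin_ex_pos_uniform (fun i r => tle (Some (r + x i)) (G (of_real x) i)))
      as [r [Hr Hall]].
    + intros i r r' H Hr'; apply tle_Some_l with (r + x i); [exact H | lra].
    + intro i; specialize (Hx i); simpl in Hx.
      destruct (G (of_real x) i) as [b|]; simpl in *; [exists (b - x i); split; lra | tauto].
    + exists r; split; [exists x; intro i; exact (Hall i) | exact Hr].
  - intros [mu [[z Hz] Hmu]]; exists z; intro i; specialize (Hz i); simpl in *.
    destruct (G (of_real z) i); simpl in *; [lra | tauto].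
Qed.

Lemma feasible_upper_cw_nonneg n (G : Tvec n -> Tvec n) :
  order_preserving G -> additively_homogeneous G ->
  feasible G -> forall mu, upper_cw_set G mu -> 0 <= mu.
Proof.
  intros Hm Hh [x [Hx0 Hx]] mu [z Hz]; apply Rnot_lt_le; intro Hmu.
  assert (Hj : exists j a, x j = Some a).
  { apply NNPP; intro Hn; apply Hx0, functional_extensionality; intro i.
    destruct (x i) eqn:E; [exfalso; eauto | reflexivity]. }
  destruct Hj as [j [a Ha]]; destruct n as [|m]; [inversion j|].
  (* the least t with x <= t + z is attained at a coordinate i0 where x is finite *)
  set (g := fun i => match x i with Some b => b - z i | None => a - z j - 1 end).
  destruct (Fin_argmax g) as [i0 Hi0]; set (t := g i0).
  assert (Hxi0 : x i0 = Some (t + z i0)).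
  { specialize (Hi0 j); unfold t, g in *; rewrite Ha in Hi0.
    destruct (x i0); [f_equal; ring | lra]. }
  assert (Hle : vle x (vshift (Some t) (of_real z))).
  { intro i; specialize (Hi0 i); unfold vshift, of_real, t, g in *; simpl.
    destruct (x i); simpl; auto; lra. }
  specialize (Hm _ _ Hle i0); rewrite Hh in Hm.
  assert (H3 : tle (x i0) (Some (t + (mu + z i0)))).
  { eapply tle_trans; [exact (Hx i0)|]; eapply tle_trans; [exact Hm|].
    specialize (Hz i0); unfold vshift in *; destruct (G (of_real z) i0); simpl in *; auto; lra. }
  rewrite Hxi0 in H3; simpl in H3; lra.
Qed.

Definition tmin (a b : Trop) : Trop :=
  match a, b with Some x, Some y => Some (Rmin x y) | _, _ => None end.

Lemma exp_Rmin x y : exp (Rmin x y) = Rmin (exp x) (exp y).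
Proof.
  unfold Rmin; destruct (Rle_dec x y) as [H|H], (Rle_dec (exp x) (exp y)) as [H'|H']; auto.
  - exfalso; apply H', exp_le_mono, H.
  - exfalso; apply H, exp_le_inv, H'.
Qed.

Lemma exp_Rmax x y : exp (Rmax x y) = Rmax (exp x) (exp y).
Proof.
  unfold Rmax; destruct (Rle_dec x y) as [H|H], (Rle_dec (exp x) (exp y)) as [H'|H']; auto.
  - exfalso; apply H', exp_le_mono, H.
  - exfalso; apply H, exp_le_inv, H'.
Qed.

Lemma texp_tmin a b : texp (tmin a b) = Rmin (texp a) (texp b).
Proof.
  destruct a as [x|], b as [y|]; simpl; [apply exp_Rmin | symmetry ..].
  - apply Rmin_right; left; apply exp_pos.
  - apply Rmin_left; left; apply exp_pos.
  - apply Rmin_left; lra.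
Qed.

Lemma Rmin_close a b a' b' e :
  Rabs (a - a') < e -> Rabs (b - b') < e -> Rabs (Rmin a b - Rmin a' b') < e.
Proof.
  intros H1 H2; apply Rabs_def2 in H1; apply Rabs_def2 in H2.
  apply Rabs_def1; unfold Rmin; repeat destruct Rle_dec; lra.
Qed.

Definition psi n (G : Tvec n -> Tvec n) (x : Tvec n) : Tvec n := fun i => tmin (x i) (G x i).

Definition psi_iter n (G : Tvec n -> Tvec n) (k : nat) : Tvec n :=
  Nat.iter k (psi G) (of_real (fun _ => 0)).

Section PsiIteration.

Variables (n : nat) (G : Tvec n -> Tvec n).
Hypothesis Hc : continuous_T G.

Lemma continuous_T_psi : continuous_T (psi G).
Proof.
  intros x eps Heps; destruct (@Hc x eps Heps) as [d [Hd Hy]].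
  exists (Rmin d eps); split; [apply Rmin_glb_lt; auto|].
  intros y Hxy i; unfold tdist, psi; rewrite !texp_tmin; apply Rmin_close.
  - eapply Rlt_le_trans; [apply Hxy | apply Rmin_r].
  - apply Hy; intro j; eapply Rlt_le_trans; [apply Hxy | apply Rmin_l].
Qed.

Lemma psi_iter_decreasing i : Un_decreasing (fun k => texp (psi_iter G k i)).
Proof. intro k; simpl; unfold psi; rewrite texp_tmin; apply Rmin_l. Qed.

Lemma psi_iter_has_lb i : has_lb (fun k => texp (psi_iter G k i)).
Proof. exists 0; intros x [k ->]; unfold opp_seq; pose proof (texp_ge0 (psi_iter G k i)); lra. Qed.

(* Continuity passes the inequality psi_iter (S k) <= G (psi_iter k) to the limit. *)
Lemma psi_iter_limit_le (l : Rvec n) :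
  (forall i, Un_cv (fun k => texp (psi_iter G k i)) (l i)) ->
  vle (fun i => tlog (l i)) (G (fun i => tlog (l i))).
Proof.
  intro Hcv; set (y := fun i => tlog (l i)).
  assert (Hle : forall i k, l i <= texp (psi_iter G k i))
    by (intros i; apply (decreasing_ineq (fun k => texp (psi_iter G k i)));
        [apply psi_iter_decreasing | apply Hcv]).
  assert (Hl0 : forall i, 0 <= l i).
  { intro i; eapply Rle_cv_lim; [intro k; apply (texp_ge0 (psi_iter G k i)) | | apply Hcv].
    intros e He; exists 0%nat; intros; unfold R_dist; rewrite Rminus_diag, Rabs_R0; exact He. }
  assert (Hy : forall i, texp (y i) = l i) by (intro i; apply texp_tlog, Hl0).
  intro i; apply tle_texp; rewrite Hy; apply Rnot_lt_le; intro Hlt.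
  set (eps := l i - texp (G y i)).
  destruct (@Hc y eps) as [d [Hd Hcont]]; [unfold eps; lra|].
  destruct (Fin_ex_nat_uniform (fun j k => texp (psi_iter G k j) - l j < d)) as [K HK].
  - intros j k k' H Hkk'.
    pose proof (decreasing_prop _ _ _ (psi_iter_decreasing j) Hkk'); lra.
  - intro j; destruct (Hcv j d Hd) as [N HN]; exists N.
    specialize (HN N (le_n _)); unfold R_dist in HN; apply Rabs_def2 in HN; lra.
  - assert (Hclose : forall j, tdist (y j) (psi_iter G K j) < d).
    { intro j; unfold tdist; rewrite Hy, Rabs_minus_sym, Rabs_pos_eq; [apply HK|].
      specialize (Hle j K); lra. }
    specialize (Hcont _ Hclose i); unfold tdist in Hcont; apply Rabs_def2 in Hcont.
    assert (l i <= texp (G (psi_iter G K) i)).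
    { eapply Rle_trans; [apply (Hle i (S K))|]; simpl; unfold psi; rewrite texp_tmin; apply Rmin_r. }
    unfold eps in *; lra.
Qed.

Lemma psi_iter_vanishes : ~ feasible G -> exists K, forall i, texp (psi_iter G K i) <= exp (-1).
Proof.
  intro Hnf.
  set (l := fun i => proj1_sig (decreasing_cv _ (psi_iter_decreasing i) (psi_iter_has_lb i))).
  assert (Hcv : forall i, Un_cv (fun k => texp (psi_iter G k i)) (l i))
    by (intro i; exact (proj2_sig (decreasing_cv _ (psi_iter_decreasing i) (psi_iter_has_lb i)))).
  assert (Hl0 : forall i, l i <= 0).
  { assert (Hzero : (fun i => tlog (l i)) = @vzero n)
      by (apply NNPP; intro Hne; apply Hnf; eexists;
          split; [exact Hne | exact (psi_iter_limit_le l Hcv)]).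
    intro i; apply Rnot_lt_le; intro Hpos.
    assert (H0 : tlog (l i) = None) by exact (f_equal (fun x => x i) Hzero).
    unfold tlog in H0; destruct Rlt_dec; [discriminate | lra]. }
  apply Fin_ex_nat_uniform.
  - intros i k k' H Hkk'; eapply Rle_trans;
      [apply (decreasing_prop _ _ _ (psi_iter_decreasing i) Hkk') | exact H].
  - intro i; destruct (Hcv i (exp (-1)) (exp_pos _)) as [N HN]; exists N.
    specialize (HN N (le_n _)); unfold R_dist in HN; apply Rabs_def2 in HN.
    specialize (Hl0 i); lra.
Qed.

End PsiIteration.

Fixpoint min_upto (f : nat -> R) (m : nat) : R :=
  match m with O => f O | S m => Rmin (min_upto f m) (f (S m)) end.

Lemma min_upto_le f m j : (j <= m)%nat -> min_upto f m <= f j.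
Proof.
  induction m as [|m IH]; intro Hj.
  - replace j with 0%nat by lia; simpl; lra.
  - simpl; destruct (Nat.eq_dec j (S m)) as [->|Hne]; [apply Rmin_r|].
    eapply Rle_trans; [apply Rmin_l | apply IH; lia].
Qed.

Lemma min_upto_glb f m b : (forall j, (j <= m)%nat -> b <= f j) -> b <= min_upto f m.
Proof.
  induction m as [|m IH]; intro Hb; simpl; [apply Hb; lia|].
  apply Rmin_glb; [apply IH; intros; apply Hb; lia | apply Hb; lia].
Qed.

Section RealIterates.

Variables (n : nat) (h : Rvec n -> Rvec n).
Hypothesis h_mono : forall x y, (forall i, x i <= y i) -> forall i, h x i <= h y i.
Hypothesis h_hom : forall x r i, h (fun j => x j + r) i = h x i + r.

(* z = min_{j <= K} (h^j(0) + j d): each term is pushed by h below the next one minus d,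
   and the last one below 0 - d. *)
Lemma super_eigenvector_of_iterate K c :
  0 < c -> (forall i, Nat.iter (S K) h (fun _ => 0) i <= - c) ->
  exists z d, 0 < d /\ forall i, h z i <= z i - d.
Proof.
  intros Hc HK.
  set (d := c / INR (S K)).
  assert (Hd : 0 < d) by (apply Rdiv_lt_0_compat; [exact Hc | apply lt_0_INR; lia]).
  assert (Hcd : c = (INR K + 1) * d) by (unfold d; rewrite S_INR; field; pose proof (pos_INR K); lra).
  set (f := fun j i => Nat.iter j h (fun _ => 0) i + INR j * d).
  set (z := fun i => min_upto (fun j => f j i) K).
  assert (Hhf : forall j i, (j <= K)%nat -> h z i <= Nat.iter (S j) h (fun _ => 0) i + INR j * d).
  { intros j i Hj; eapply Rle_trans; [apply h_mono; intro; apply (min_upto_le (fun j => f j _) Hj)|].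
    unfold f; rewrite h_hom; apply Rle_refl. }
  exists z, d; split; [exact Hd|]; intro i.
  cut (h z i + d <= z i); [lra|].
  apply min_upto_glb; intros [|j] Hj.
  - specialize (Hhf K i (le_n _)); specialize (HK i); unfold f; simpl; lra.
  - specialize (Hhf j i ltac:(lia)); unfold f; rewrite S_INR; lra.
Qed.

End RealIterates.

(* [exp (psi_floor G t x)] is [max (exp (psi G x), exp (t + x))]: a finite perturbation of
   [psi G], small when [t] is very negative. *)
Definition psi_floor n (G : Tvec n -> Tvec n) (t : R) (x : Rvec n) : Rvec n :=
  fun i => match G (of_real x) i with
           | Some b => Rmax (Rmin (x i) b) (t + x i)
           | None => t + x i
           end.

Section PsiFloor.

Variables (n : nat) (G : Tvec n -> Tvec n).

Lemma psi_floor_le t x i : t <= 0 -> psi_floor G t x i <= x i.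
Proof.
  intro Ht; unfold psi_floor; destruct (G (of_real x) i); [|lra].
  apply Rmax_lub; [apply Rmin_l | lra].
Qed.

Lemma psi_floor_iter_nonpos t k i : t <= 0 -> Nat.iter k (psi_floor G t) (fun _ => 0) i <= 0.
Proof.
  intro Ht; revert i; induction k as [|k IH]; intro i; simpl; [lra|].
  eapply Rle_trans; [apply psi_floor_le; exact Ht | apply IH].
Qed.

Lemma exp_psi_floor t x i :
  exp (psi_floor G t x i) = Rmax (texp (psi G (of_real x) i)) (exp (t + x i)).
Proof.
  unfold psi_floor, psi; unfold of_real at 2; destruct (G (of_real x) i); simpl.
  - rewrite exp_Rmax, exp_Rmin; reflexivity.
  - symmetry; apply Rmax_right; left; apply exp_pos.
Qed.

Lemma psi_floor_mono t : order_preserving G ->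
  forall x y, (forall i, x i <= y i) -> forall i, psi_floor G t x i <= psi_floor G t y i.
Proof.
  intros Hm x y Hxy i.
  assert (Hv : vle (of_real x) (of_real y)) by (intro j; apply Hxy).
  specialize (Hm _ _ Hv i); specialize (Hxy i); unfold psi_floor.
  destruct (G (of_real x) i), (G (of_real y) i); simpl in *; try tauto.
  - apply Rmax_lub.
    + eapply Rle_trans; [|apply Rmax_l]; unfold Rmin; repeat destruct Rle_dec; lra.
    + eapply Rle_trans; [|apply Rmax_r]; lra.
  - eapply Rle_trans; [|apply Rmax_r]; lra.
  - lra.
Qed.

Lemma psi_floor_hom t : additively_homogeneous G ->
  forall x r i, psi_floor G t (fun j => x j + r) i = psi_floor G t x i + r.
Proof.
  intros Hh x r i; unfold psi_floor.
  replace (of_real (fun j => x j + r)) with (vshift (Some r) (of_real x))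
    by (apply functional_extensionality; intro j; unfold of_real, vshift; simpl; f_equal; ring).
  rewrite Hh; unfold vshift; destruct (G (of_real x) i); simpl;
    [unfold Rmax, Rmin; repeat destruct Rle_dec; lra | ring].
Qed.

Lemma upper_cw_set_of_psi_floor t z d :
  0 < d -> (forall i, psi_floor G t z i <= z i - d) -> upper_cw_set G (- d).
Proof.
  intros Hd Hz; exists z; intro i; specialize (Hz i); unfold psi_floor in Hz; simpl.
  destruct (G (of_real z) i) as [b|]; simpl; [|exact I].
  assert (Rmin (z i) b <= z i - d) by (eapply Rle_trans; [apply Rmax_l | exact Hz]).
  revert H; unfold Rmin; destruct Rle_dec; lra.
Qed.

Lemma psi_floor_iter_approx : continuous_T G -> forall k eps, 0 < eps ->
  exists t0, t0 <= 0 /\ forall t, t <= t0 -> forall i,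
    Rabs (exp (Nat.iter k (psi_floor G t) (fun _ => 0) i) - texp (psi_iter G k i)) < eps.
Proof.
  intros Hc k; induction k as [|k IH]; intros eps Heps.
  - exists 0; split; [lra|]; intros t Ht i; simpl; rewrite Rminus_diag, Rabs_R0; exact Heps.
  - pose proof (continuous_T_psi Hc) as Hpsi.
    destruct (Hpsi (psi_iter G k) (eps / 2)) as [d [Hd Hcont]]; [lra|].
    destruct (IH d Hd) as [t0 [Ht0 Hw]].
    exists (Rmin t0 (ln (eps / 2) - 1)); split; [eapply Rle_trans; [apply Rmin_l | exact Ht0]|].
    intros t Ht i; simpl; rewrite exp_psi_floor.
    set (w := Nat.iter k (psi_floor G t) (fun _ => 0)).
    assert (Hclose : forall j, tdist (psi_iter G k j) (of_real w j) < d).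
    { intro j; unfold tdist; rewrite Rabs_minus_sym; apply Hw.
      eapply Rle_trans; [exact Ht | apply Rmin_l]. }
    specialize (Hcont _ Hclose i); unfold tdist in Hcont; apply Rabs_def2 in Hcont.
    assert (Hsmall : exp (t + w i) < eps / 2).
    { pose proof (psi_floor_iter_nonpos k i (Rle_trans _ _ _ Ht (Rle_trans _ _ _ (Rmin_l _ _) Ht0))).
      assert (t <= ln (eps / 2) - 1) by (eapply Rle_trans; [exact Ht | apply Rmin_r]).
      rewrite <- (exp_ln (eps / 2)) by lra; apply exp_increasing; unfold w; lra. }
    pose proof (exp_pos (t + w i)); pose proof (texp_ge0 (psi G (psi_iter G k) i)).
    apply Rabs_def1; unfold Rmax; destruct Rle_dec; simpl in *; lra.
Qed.

End PsiFloor.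

Lemma infeasible_upper_cw_neg n (G : Tvec n -> Tvec n) :
  continuous_T G -> order_preserving G -> additively_homogeneous G ->
  ~ feasible G -> exists mu, upper_cw_set G mu /\ mu < 0.
Proof.
  intros Hc Hm Hh Hnf.
  destruct (psi_iter_vanishes Hc Hnf) as [K HK].
  assert (Hgap : exp (-1) < exp (-1/2)) by (apply exp_increasing; lra).
  destruct (psi_floor_iter_approx Hc K (eps := exp (-1/2) - exp (-1))) as [t [Ht Hw]]; [lra|].
  assert (HwK : forall i, Nat.iter K (psi_floor G t) (fun _ => 0) i <= - (1/2)).
  { intro i; specialize (Hw t (Rle_refl _) i); specialize (HK i); apply Rabs_def2 in Hw.
    left; apply exp_lt_inv; replace (- (1/2)) with (-1/2) by field; lra. }
  assert (Hhalf : 0 < 1/2) by lra.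
  destruct (super_eigenvector_of_iterate _ (psi_floor_mono t Hm) (psi_floor_hom t Hh) K Hhalf)
    as [z [d [Hd Hz]]].
  - intro i; simpl; eapply Rle_trans; [apply psi_floor_le; exact Ht | apply HwK].
  - exists (- d); split; [exact (upper_cw_set_of_psi_floor G t z Hd Hz) | lra].
Qed.

Lemma infeasible_iff n (G : Tvec n -> Tvec n) :
  continuous_T G -> order_preserving G -> additively_homogeneous G ->
  ~ feasible G <-> exists mu, upper_cw_set G mu /\ mu < 0.
Proof.
  intros Hc Hm Hh; split; [exact (infeasible_upper_cw_neg Hc Hm Hh)|].
  intros [mu [Hmu Hneg]] Hf; pose proof (feasible_upper_cw_nonneg Hm Hh Hf Hmu); lra.
Qed.

Lemma cond_R_eq_cw_lower n (F : Tvec n -> Tvec n) : cond_R F = ER_inv (ER_abs (cw_lower F)).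
Proof.
  destruct (ER_sup_exists (lower_cw_set F)) as [s Hs].
  change (cw_lower F) with (ER_sup (lower_cw_set F)); rewrite (ER_sup_eq Hs).
  apply (cond_gen_eq_margin _ _ Hs); [apply feasible_R_iff | | |].
  - intros u Hu; destruct (proj1 (feasible_R_iff _) Hu) as [mu [Hmu Hpos]].
    exists (mu - vnorm u); split; [|lra].
    apply (lower_cw_set_untranslate (u := u)); [intro i; apply vnorm_bounds | exact Hmu].
  - intros u [mu [Hmu Hlt]]; apply feasible_R_iff; exists (mu + - vnorm u); split; [|lra].
    apply lower_cw_set_translate; [intro i; apply vnorm_bounds | exact Hmu].
  - intros [r ->] c; destruct n as [|m].
    + exfalso; pose proof (proj1 Hs (r + 1) (lower_cw_set_dim0 F (r + 1))); simpl in *; lra.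
    + exists (fun _ => c); split; [apply vnorm_const|]; rewrite feasible_R_iff; split.
      * intros [mu [Hmu Hpos]]; exists (mu - c); split; [|lra].
        apply (lower_cw_set_untranslate (u := fun _ => c)); [intro; lra | exact Hmu].
      * intros [mu [Hmu Hlt]]; exists (mu + c); split; [|lra].
        apply lower_cw_set_translate; [intro; lra | exact Hmu].
Qed.

(* The upper problem is the lower one for [~ feasible] and the reflected set -upper_cw_set. *)
Lemma cond_eq_cw_upper n (F : Tvec n -> Tvec n) :
  continuous_T F -> order_preserving F -> additively_homogeneous F ->
  cond F = ER_inv (ER_abs (cw_upper F)).
Proof.
  intros Hc Hm Hh.
  assert (Htr : forall u, ~ feasible (translate u F) <->
                          exists mu, upper_cw_set (translate u F) mu /\ mu < 0)
    by (intro u; apply infeasible_iff; [apply continuous_T_translate | apply order_preserving_translate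
                                        | apply additively_homogeneous_translate]; assumption).
  destruct (ER_sup_exists (fun mu => upper_cw_set F (- mu))) as [s Hs].
  change (cw_upper F) with (ER_inf (upper_cw_set F)).
  rewrite (ER_inf_eq (is_ER_inf_opp _ Hs)), ER_abs_opp.
  unfold cond; rewrite <- cond_gen_not; apply (cond_gen_eq_margin _ _ Hs).
  - rewrite infeasible_iff by assumption; split.
    + intros [mu [Hmu Hneg]]; exists (- mu); rewrite Ropp_involutive; split; [exact Hmu | lra].
    + intros [mu [Hmu Hpos]]; exists (- mu); split; [exact Hmu | lra].
  - intros u Hu; destruct (proj1 (Htr u) Hu) as [mu [Hmu Hneg]].
    exists (- (mu + vnorm u)); rewrite Ropp_involutive; split; [|lra].
    replace (mu + vnorm u) with (mu - - vnorm u) by ring.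
    apply (upper_cw_set_untranslate (u := u)); [intro i; apply vnorm_bounds | exact Hmu].
  - intros u [mu [Hmu Hlt]]; apply Htr; exists (- mu + vnorm u); split; [|lra].
    apply upper_cw_set_translate; [intro i; apply vnorm_bounds | exact Hmu].
  - intros [r ->] c; destruct n as [|m].
    + exfalso; pose proof (proj1 Hs (r + 1) (upper_cw_set_dim0 F (- (r + 1)))); simpl in *; lra.
    + exists (fun _ => - c); split; [rewrite vnorm_const; apply Rabs_Ropp|]; rewrite Htr; split.
      * intros [mu [Hmu Hneg]]; exists (- (mu - - c)); rewrite Ropp_involutive; split; [|lra].
        apply (upper_cw_set_untranslate (u := fun _ => - c)); [intro; lra | exact Hmu].
      * intros [mu [Hmu Hlt]]; exists (- mu + - c); split; [|lra].
        apply upper_cw_set_translate; [intro; lra | exact Hmu].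
Qed.

Theorem mainTheorem1 (n : nat) (F : Tvec n -> Tvec n)
  (Hcont : continuous_T F) (Hmono : order_preserving F)
  (Hhom : additively_homogeneous F) :
  cond_R F = ER_inv (ER_abs (cw_lower F)) /\
  cond F = ER_inv (ER_abs (cw_upper F)).
Proof.
  split; [apply cond_R_eq_cw_lower | apply cond_eq_cw_upper; assumption].
Qed.
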